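(* Let $S\subseteq\mathbb{C}^2\otimes\mathbb{C}^2$ be a two-dimensional subspace whose orthogonal projector $P_S$ is separable. Then $S$ has an orthonormal basis consisting of product states. Moreover, if $|\psi\rangle$ and $|\Phi\rangle$ are any two orthogonal entangled unit vectors in $S^\perp$, then (i) $\psi\Phi^{-1}$ has two antiparallel eigenvalues, and (ii) $C(\psi)=C(\Phi)$.
   Context: For a two-qubit pure state $|\psi\rangle\in\mathbb{C}^2\otimes\mathbb{C}^2$, $\psi$ denotes the unique $2\times 2$ complex matrix with $|\psi\rangle=(\mathbb{I}\otimes\psi)|\Psi^+\rangle$, where $|\Psi^+\rangle=\tfrac{1}{\sqrt2}(|00\rangle+|11\rangle)$. The concurrence of $|\psi\rangle$ is $C(\psi)=|\det\psi|$; $|\psi\rangle$ is entangled iff $C(\psi)>0$, i.e. iff $\psi$ is invertible. Two complex numbers $z_1,z_2$ are antiparallel if $z_1=az_2$ for some real $a<0$; a $2\times2$ matrix ''has two antiparallel eigenvalues'' if its two eigenvalues are antiparallel. A positive semidefinite operator on $\mathbb{C}^2\otimes\mathbb{C}^2$ is separable if it is a nonnegative linear combination of product projectors $|a\rangle\langle a|\otimes|b\rangle\langle b|$. *)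

(* The field of complex numbers is modelled by an arbitrary
   numClosedFieldType C (algebraically closed field with conjugation and the
   partial order 0 <= z <-> z real nonnegative). *)
From HB Require Import structures.
From mathcomp Require Import all_boot all_order all_algebra.
Set Implicit Arguments. Unset Strict Implicit. Unset Printing Implicit Defensive.
Import Order.TTheory GRing.Theory Num.Theory.
Local Open Scope ring_scope.

Section Defs.
Variable C : numClosedFieldType.

Definition adj (m n : nat) (A : 'M[C]_(m, n)) : 'M[C]_(n, m) :=
  (map_mx (fun z => z^*) A)^T.

Definition inner (n : nat) (u v : 'cV[C]_n) : C := (adj u *m v) 0 0.

Definition unit_vec (n : nat) (u : 'cV[C]_n) : Prop := inner u u = 1.

(* C^2 (x) C^2 = C^4, basis |a b> <-> index 2*a + b *)
Definition kronv (u v : 'cV[C]_2) : 'cV[C]_4 :=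
  \col_(i < 4) (u (inord (i %/ 2)) 0 * v (inord (i %% 2)) 0).

Definition kronm (A B : 'M[C]_2) : 'M[C]_4 :=
  \matrix_(i < 4, j < 4)
     (A (inord (i %/ 2)) (inord (j %/ 2)) * B (inord (i %% 2)) (inord (j %% 2))).

Definition ketbra (n : nat) (a : 'cV[C]_n) : 'M[C]_n := a *m adj a.

Definition separable (P : 'M[C]_4) : Prop :=
  exists (k : nat) (t : 'I_k -> C) (a b : 'I_k -> 'cV[C]_2),
    (forall i, 0 <= t i) /\ (forall i, unit_vec (a i)) /\
    (forall i, unit_vec (b i)) /\
    P = \sum_(i < k) t i *: kronm (ketbra (a i)) (ketbra (b i)).

(* the matrix psi with |psi> = (I (x) psi)|Psi+>, |Psi+> = (|00>+|11>)/sqrt 2;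
   component <a b|psi> = psi_{b a} / sqrt 2 *)
Definition assoc_mx (v : 'cV[C]_4) : 'M[C]_2 :=
  \matrix_(b < 2, a < 2) (sqrtC 2 * v (inord (2 * a + b)) 0).

Definition concurrence (v : 'cV[C]_4) : C := `|\det (assoc_mx v)|.

Definition entangled (v : 'cV[C]_4) : Prop := concurrence v > 0.

Definition product_state (v : 'cV[C]_4) : Prop :=
  exists a b : 'cV[C]_2, v = kronv a b.

Definition antiparallel (z1 z2 : C) : Prop :=
  exists a : C, a \is Num.real /\ a < 0 /\ z1 = a * z2.

Definition two_antiparallel_eigenvalues (M : 'M[C]_2) : Prop :=
  exists z1 z2 : C, char_poly M = ('X - z1%:P) * ('X - z2%:P) /\ antiparallel z1 z2.

Definition orth_proj2 (P : 'M[C]_4) : Prop :=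
  adj P = P /\ P *m P = P /\ \rank P = 2%N.

Definition in_range (P : 'M[C]_4) (v : 'cV[C]_4) : Prop := P *m v = v.

Definition in_perp (P : 'M[C]_4) (v : 'cV[C]_4) : Prop :=
  forall w, in_range P w -> inner w v = 0.

End Defs.

(* Write P = sum_l t_l |a_l b_l><a_l b_l| with t_l >= 0.  As P is a projector,
   every a_l (x) b_l of positive weight lies in S; as P has rank two, two of
   them, x_i and x_j, are not parallel and hence span S.  If a_i // a_j (or
   b_i // b_j), S = a_i (x) C^2 (or C^2 (x) b_i), with an evident orthonormal
   product basis.  Otherwise a combination of x_i and x_j is a product vector
   only on the two axes, so every term of P lies on an axis, and comparing
   matrix elements of P forces <x_i|x_j> = 0.  In all cases the basis
   (a (x) b, c (x) d) of S is orthogonal in one tensor factor, so completing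
   each factor by its orthogonal vector gives an orthonormal product basis
   p, q of S^perp.  For psi = x1 p + y1 q and Phi = x2 p + y2 q the associated
   matrices have determinants 2 x y (r1 /\ r2)(s1 /\ s2), whence psi Phi^-1
   has eigenvalues x1/x2 and y1/y2; unitarity of the coefficient matrix makes
   them antiparallel and gives |x1 y1| = |x2 y2|. *)

From mathcomp Require Import all_boot all_order all_algebra.
From mathcomp Require Import ring.
Import Order.TTheory GRing.Theory Num.Theory.
Local Open Scope ring_scope.
Set Implicit Arguments. Unset Strict Implicit. Unset Printing Implicit Defensive.

Section InnerProduct.
Variables (C : numClosedFieldType) (n : nat).
Implicit Types (u v w : 'cV[C]_n).

Lemma innerE u v : inner u v = \sum_i (u i 0)^* * v i 0.
Proof. by rewrite /inner mxE; apply: eq_bigr => i _; rewrite !mxE. Qed.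

Lemma innerDr u v w : inner u (v + w) = inner u v + inner u w.
Proof. rewrite !innerE -big_split /=; apply: eq_bigr => i _; rewrite mxE; ring. Qed.

Lemma innerDl u v w : inner (v + w) u = inner v u + inner w u.
Proof. rewrite !innerE -big_split /=; apply: eq_bigr => i _; rewrite mxE rmorphD; ring. Qed.

Lemma innerZr u v (k : C) : inner u (k *: v) = k * inner u v.
Proof. rewrite !innerE mulr_sumr; apply: eq_bigr => i _; rewrite mxE; ring. Qed.

Lemma innerZl u v (k : C) : inner (k *: v) u = k^* * inner v u.
Proof. rewrite !innerE mulr_sumr; apply: eq_bigr => i _; rewrite mxE rmorphM; ring. Qed.

Lemma inner_conj u v : inner v u = (inner u v)^*.
Proof.
rewrite !innerE rmorph_sum; apply: eq_bigr => i _.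
by rewrite rmorphM /= conjCK mulrC.
Qed.

Lemma inner_orth_sym u v : inner u v = 0 -> inner v u = 0.
Proof. by move=> h; rewrite inner_conj h rmorph0. Qed.

Lemma inner0r u : inner u 0 = 0.
Proof. by rewrite innerE big1 // => i _; rewrite mxE mulr0. Qed.

Lemma innerBl u v w : inner (v - w) u = inner v u - inner w u.
Proof. by rewrite innerDl -scaleN1r innerZl rmorphN1 mulN1r. Qed.

Lemma inner_sumr u (I : finType) (F : I -> 'cV[C]_n) :
  inner u (\sum_i F i) = \sum_i inner u (F i).
Proof.
rewrite innerE.
under eq_bigr => i _ do rewrite summxE mulr_sumr.
by rewrite exchange_big /=; apply: eq_bigr => j _; rewrite innerE.
Qed.

Lemma inner_self_eq0 u : inner u u = 0 -> u = 0.
Proof.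
rewrite innerE => /eqP; rewrite psumr_eq0 => [/allP H|i _]; last first.
  by rewrite mulrC -normCK exprn_ge0.
apply/matrixP => i j; rewrite (ord1 j) mxE.
have := H i (mem_index_enum i); rewrite mulrC -normCK sqrf_eq0 normr_eq0.
by move=> /eqP.
Qed.

Lemma inner_adj (A : 'M[C]_n) u v : inner (A *m u) v = inner u (adj A *m v).
Proof.
rewrite !innerE.
under eq_bigr => i _ do rewrite mxE rmorph_sum mulr_suml.
under [RHS]eq_bigr => i _ do rewrite mxE mulr_sumr.
rewrite exchange_big /=; apply: eq_bigr => i _; apply: eq_bigr => j _.
rewrite !mxE rmorphM; ring.
Qed.

Lemma ketbra_mul u v : ketbra u *m v = inner u v *: u.
Proof.
apply/matrixP => i j; rewrite (ord1 j) !mxE innerE mulr_suml.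
by apply: eq_bigr => k _; rewrite !mxE big_ord1 !mxE; ring.
Qed.

Lemma ketbraZ u (k : C) : ketbra (k *: u) = (k * k^*) *: ketbra u.
Proof. by apply/matrixP => i j; rewrite !mxE !big_ord1 !mxE rmorphM; ring. Qed.

Lemma inner_wsum_ketbra k (t : 'I_k -> C) (x : 'I_k -> 'cV[C]_n) u v :
  inner u ((\sum_(i < k) t i *: ketbra (x i)) *m v) =
  \sum_i t i * inner (x i) v * inner u (x i).
Proof.
rewrite mulmx_suml inner_sumr; apply: eq_bigr => i _.
by rewrite -scalemxAl ketbra_mul scalerA innerZr.
Qed.

End InnerProduct.

Section Coordinates.
Variable C : numClosedFieldType.

Lemma sum2 (F : 'I_2 -> C) : \sum_(i < 2) F i = F (inord 0) + F (inord 1).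
Proof.
rewrite !big_ord_recr big_ord0 /= add0r.
by congr (F _ + F _); apply/val_inj; rewrite /= inordK.
Qed.

Lemma sum4 (F : 'I_4 -> C) :
  \sum_(i < 4) F i = F (inord 0) + F (inord 1) + F (inord 2) + F (inord 3).
Proof.
rewrite !big_ord_recr big_ord0 /= add0r.
by congr (F _ + F _ + F _ + F _); apply/val_inj; rewrite /= inordK.
Qed.

Lemma det2 (A : 'M[C]_2) : \det A =
  A (inord 0) (inord 0) * A (inord 1) (inord 1)
  - A (inord 0) (inord 1) * A (inord 1) (inord 0).
Proof.
rewrite (expand_det_row _ (inord 0)) sum2 /cofactor !det_mx11 !mxE.
have -> : lift (inord 0) 0 = inord 1 :> 'I_2 by apply/val_inj; rewrite /= !inordK.
have -> : lift (inord 1) 0 = inord 0 :> 'I_2 by apply/val_inj; rewrite /= !inordK.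
by rewrite !inordK //= expr0 expr1; ring.
Qed.

End Coordinates.

Section Projectors.
Variables (C : numClosedFieldType) (n : nat).
Implicit Types (u v w : 'cV[C]_n).

(* If an orthogonal projector is a nonnegative combination of rank-one
   projectors, every vector carrying a positive weight lies in its range:
   the weight of x_i in <y|P|y> vanishes for y = x_i - P x_i. *)
Lemma projector_fixes_terms k (t : 'I_k -> C) (x : 'I_k -> 'cV[C]_n)
    (P : 'M[C]_n) :
  adj P = P -> P *m P = P -> (forall i, 0 <= t i) ->
  P = \sum_(i < k) t i *: ketbra (x i) ->
  forall i, 0 < t i -> P *m x i = x i.
Proof.
move=> hA hI ht hP i0 hti.
set y := x i0 - P *m x i0.
have Py : P *m y = 0 by rewrite mulmxBr mulmxA hI subrr.
have weights0 : \sum_i t i * (inner (x i) y * (inner (x i) y)^*) = 0.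
  rewrite -[RHS](_ : inner y (P *m y) = 0); last by rewrite Py inner0r.
  rewrite [in RHS]hP inner_wsum_ketbra.
  by apply: eq_bigr => i _; rewrite (inner_conj (x i) y) mulrA.
have : t i0 * (inner (x i0) y * (inner (x i0) y)^*) == 0.
  move/eqP: weights0; rewrite psumr_eq0 => [/allP H|i _].
    exact: H i0 (mem_index_enum _).
  by rewrite -normCK mulr_ge0 // exprn_ge0.
rewrite mulf_eq0 (gt_eqF hti) /= -normCK sqrf_eq0 normr_eq0 => /eqP hxy.
have : inner y y = 0 by rewrite {1}/y innerBl hxy inner_adj hA Py inner0r subrr.
by move=> /inner_self_eq0/eqP; rewrite subr_eq0 => /eqP.
Qed.

(* Two non-parallel (|<x|y>| != 1) unit vectors fixed by a rank-two matrix P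
   span its fixed space: the rows x^T, y^T are independent (their Gram matrix
   is invertible) and lie in the two-dimensional row space of P^T. *)
Lemma rank2_span (P : 'M[C]_n) (x y : 'cV[C]_n) :
  \rank P = 2 -> P *m x = x -> P *m y = y -> inner x x = 1 -> inner y y = 1 ->
  inner x y * (inner x y)^* != 1 ->
  forall v, P *m v = v -> exists al be : C, v = al *: x + be *: y.
Proof.
move=> rP Px Py nx ny hg v Pv.
pose z (r : 'I_2) := if val r == 0%N then x else y.
pose N := \matrix_(r < 2, c < n) z r c 0.
pose G := \matrix_(c < n, r < 2) (z r c 0)^*.
have z0 : z (inord 0) = x by rewrite /z /= inordK.
have z1 : z (inord 1) = y by rewrite /z /= inordK.
have NP : N *m P^T = N.
  apply/matrixP => r c; rewrite !mxE.
  have <- : (P *m z r) c 0 = z r c 0 by rewrite /z; case: ifP; rewrite ?Px ?Py.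
  by rewrite mxE; apply: eq_bigr => l _; rewrite !mxE mulrC.
have gram : forall r r', (N *m G) r r' = inner (z r') (z r).
  by move=> r r'; rewrite mxE innerE; apply: eq_bigr => l _; rewrite !mxE mulrC.
have rN : \rank N = 2%N.
  apply/eqP; rewrite eqn_leq rank_leq_row /=.
  have rNG : \rank (N *m G) = 2%N.
    apply: mxrank_unit; rewrite unitmxE unitfE det2 !gram z0 z1 nx ny.
    by rewrite (inner_conj x y) mul1r subr_eq0 eq_sym mulrC.
  by rewrite -{1}rNG mxrankM_maxl.
have sNP : (N <= P^T)%MS by rewrite -NP submxMl.
have sPN : (P^T <= N)%MS.
  by have := mxrank_leqif_sup sNP; rewrite mxrank_tr rP rN => -[_ <-].
have /submxP [D hD] : (v^T <= N)%MS.
  by apply: submx_trans sPN; rewrite -Pv trmx_mul submxMl.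
exists (D 0 (inord 0)), (D 0 (inord 1)).
apply/matrixP => c j; rewrite (ord1 j).
have := congr1 (fun M : 'M_(1, n) => M 0 c) hD; rewrite !mxE => ->.
by rewrite sum2 !mxE z0 z1.
Qed.

Lemma rank_scaled_ketbra (x : 'cV[C]_n) (s : C) : (\rank (s *: ketbra x) <= 1)%N.
Proof.
by rewrite /ketbra scalemxAl; exact: leq_trans (mxrankM_maxl _ _) (rank_leq_col _).
Qed.

Lemma overlaps_on_axis (u w x : 'cV[C]_n) (al be : C) :
  inner u u = 1 -> inner w w = 1 -> inner x x = 1 ->
  x = al *: u + be *: w -> al * be = 0 ->
  inner x u * inner u x + inner x w * inner w x = 1 + inner u w * (inner u w)^*
  /\ inner x w * inner u x = inner u w.
Proof.
move=> nu nw nx hx hab; subst x; move: nx.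
rewrite !(innerDl, innerDr, innerZl, innerZr) nu nw (inner_conj u w).
set g := inner u w.
move/eqP: hab; rewrite mulf_eq0 => /orP [] /eqP ->;
  rewrite ?rmorph0 ?mul0r ?mulr0 ?add0r ?addr0 ?mulr1 => nx.
- split; [transitivity (be^* * be * (1 + g * g^*)) | transitivity (be^* * be * g)];
    by [ring | rewrite nx mul1r].
- split; [transitivity (al^* * al * (1 + g * g^*)) | transitivity (al^* * al * g)];
    by [ring | rewrite nx mul1r].
Qed.

(* Comparing
   <u|P|u> + <w|P|w> = 2 and <u|P|w> = <u|w> with their expansions gives
   T (1 + |g|^2) = 2 and g = T g (T the total weight, g = <u|w>), which forces
   g = 0 since |g| < 1. *)
Lemma orth_of_axis_terms k (t : 'I_k -> C) (x : 'I_k -> 'cV[C]_n)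
    (P : 'M[C]_n) (u w : 'cV[C]_n) :
  (forall l, 0 <= t l) -> P = \sum_(l < k) t l *: ketbra (x l) ->
  P *m u = u -> P *m w = w -> inner u u = 1 -> inner w w = 1 ->
  (forall l, inner (x l) (x l) = 1) ->
  (forall l, 0 < t l -> exists al be, x l = al *: u + be *: w /\ al * be = 0) ->
  inner u w * (inner u w)^* != 1 ->
  inner u w = 0.
Proof.
move=> ht hP Pu Pw nu nw nx axis hg.
set g := inner u w; set T := \sum_l t l.
have term l : t l * inner (x l) u * inner u (x l) + t l * inner (x l) w * inner w (x l)
              = t l * (1 + g * g^*) /\ t l * inner (x l) w * inner u (x l) = t l * g.
  have := ht l; rewrite le_eqVlt => /orP [/eqP <-|tl]; first by rewrite !mul0r addr0.
  have [al [be [hx hab]]] := axis l tl.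
  have [e1 e2] := overlaps_on_axis nu nw (nx l) hx hab.
  by rewrite -/g in e1 e2; rewrite -e1 -e2; split; ring.
have diag : 1 + 1 = T * (1 + g * g^*).
  transitivity (inner u (P *m u) + inner w (P *m w)); first by rewrite Pu Pw nu nw.
  rewrite {1}hP {1}hP !inner_wsum_ketbra -big_split.
  by rewrite /T mulr_suml; apply: eq_bigr => l _; case: (term l).
have offdiag : g = T * g.
  rewrite {1}/g -{1}Pw {1}hP inner_wsum_ketbra /T mulr_suml.
  by apply: eq_bigr => l _; case: (term l).
apply/eqP; apply: contraLR hg => gn0.
have T1 : T = 1 by apply: (mulIf gn0); rewrite mul1r -offdiag.
by move: diag; rewrite T1 mul1r => /addrI ->; rewrite negbK.
Qed.

Lemma orthonormal_expansion (f : 'I_n -> 'cV[C]_n) :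
  (forall i j, inner (f i) (f j) = (i == j)%:R) ->
  forall v, v = \sum_i inner (f i) v *: f i.
Proof.
move=> hf v.
pose U := \matrix_(r < n, k < n) f k r 0.
have UU : adj U *m U = 1%:M.
  by apply/matrixP => i j; rewrite !mxE -hf innerE; apply: eq_bigr => l _; rewrite !mxE.
apply/matrixP => r c; rewrite (ord1 c).
have := congr1 (fun M => (M *m v) r 0) (mulmx1C UU); rewrite mul1mx -mulmxA => <-.
rewrite mxE summxE; apply: eq_bigr => k _; rewrite !mxE innerE mulrC; congr (_ * _).
by apply: eq_bigr => l _; rewrite !mxE.
Qed.

End Projectors.

Section Kronecker.
Variable C : numClosedFieldType.
Implicit Types (u v : 'cV[C]_4) (a b c d : 'cV[C]_2).

Lemma cvD n (x y : 'cV[C]_n) i : (x + y) i 0 = x i 0 + y i 0.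
Proof. by rewrite mxE. Qed.

Lemma cvZ n (x : 'cV[C]_n) (k : C) i : (k *: x) i 0 = k * x i 0.
Proof. by rewrite mxE. Qed.

Definition cvE := (cvD, cvZ).

Lemma inner2 a b : inner a b =
  (a (inord 0) 0)^* * b (inord 0) 0 + (a (inord 1) 0)^* * b (inord 1) 0.
Proof. by rewrite innerE sum2. Qed.

Lemma inner4 u v : inner u v =
  (u (inord 0) 0)^* * v (inord 0) 0 + (u (inord 1) 0)^* * v (inord 1) 0 +
  (u (inord 2) 0)^* * v (inord 2) 0 + (u (inord 3) 0)^* * v (inord 3) 0.
Proof. by rewrite innerE sum4. Qed.

Lemma vec2P a b :
  a (inord 0) 0 = b (inord 0) 0 -> a (inord 1) 0 = b (inord 1) 0 -> a = b.
Proof.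
move=> h0 h1; apply/matrixP => i j; rewrite (ord1 j).
case: i => [[|[|k]] Hk] //.
- by have -> : Ordinal Hk = inord 0 by apply/val_inj; rewrite /= inordK.
- by have -> : Ordinal Hk = inord 1 by apply/val_inj; rewrite /= inordK.
Qed.

Lemma vec4P u v :
  u (inord 0) 0 = v (inord 0) 0 -> u (inord 1) 0 = v (inord 1) 0 ->
  u (inord 2) 0 = v (inord 2) 0 -> u (inord 3) 0 = v (inord 3) 0 -> u = v.
Proof.
move=> h0 h1 h2 h3; apply/matrixP => i j; rewrite (ord1 j).
case: i => [[|[|[|[|k]]]] Hk] //.
- by have -> : Ordinal Hk = inord 0 by apply/val_inj; rewrite /= inordK.
- by have -> : Ordinal Hk = inord 1 by apply/val_inj; rewrite /= inordK.
- by have -> : Ordinal Hk = inord 2 by apply/val_inj; rewrite /= inordK.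
- by have -> : Ordinal Hk = inord 3 by apply/val_inj; rewrite /= inordK.
Qed.

Lemma kronv0 a b : kronv a b (inord 0) 0 = a (inord 0) 0 * b (inord 0) 0.
Proof. by rewrite mxE inordK. Qed.
Lemma kronv1 a b : kronv a b (inord 1) 0 = a (inord 0) 0 * b (inord 1) 0.
Proof. by rewrite mxE inordK. Qed.
Lemma kronv2 a b : kronv a b (inord 2) 0 = a (inord 1) 0 * b (inord 0) 0.
Proof. by rewrite mxE inordK. Qed.
Lemma kronv3 a b : kronv a b (inord 3) 0 = a (inord 1) 0 * b (inord 1) 0.
Proof. by rewrite mxE inordK. Qed.

Definition kronvE := (kronv0, kronv1, kronv2, kronv3).

Lemma kronvDr a b c : kronv a (b + c) = kronv a b + kronv a c.
Proof. by apply: vec4P; rewrite !(cvE, kronvE); ring. Qed.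
Lemma kronvDl a b c : kronv (b + c) a = kronv b a + kronv c a.
Proof. by apply: vec4P; rewrite !(cvE, kronvE); ring. Qed.
Lemma kronvZr a b (k : C) : kronv a (k *: b) = k *: kronv a b.
Proof. by apply: vec4P; rewrite !(cvE, kronvE); ring. Qed.
Lemma kronvZl a b (k : C) : kronv (k *: a) b = k *: kronv a b.
Proof. by apply: vec4P; rewrite !(cvE, kronvE); ring. Qed.

Lemma inner_kron a b c d : inner (kronv a b) (kronv c d) = inner a c * inner b d.
Proof. by rewrite inner4 !inner2 !kronvE !rmorphM; ring. Qed.

Lemma kronm_ketbra a b : kronm (ketbra a) (ketbra b) = ketbra (kronv a b).
Proof. by apply/matrixP => i j; rewrite !mxE !big_ord1 !mxE rmorphM; ring. Qed.

End Kronecker.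

Section Qubit.
Variable C : numClosedFieldType.
Implicit Types (a b c d w : 'cV[C]_2).

Definition wedge a c : C := a (inord 0) 0 * c (inord 1) 0 - a (inord 1) 0 * c (inord 0) 0.

Definition perp2 b : 'cV[C]_2 :=
  \col_(i < 2) (if val i == 0%N then - (b (inord 1) 0)^* else (b (inord 0) 0)^*).

Lemma perp2_0 b : perp2 b (inord 0) 0 = - (b (inord 1) 0)^*.
Proof. by rewrite mxE /= inordK. Qed.
Lemma perp2_1 b : perp2 b (inord 1) 0 = (b (inord 0) 0)^*.
Proof. by rewrite mxE /= inordK. Qed.
Definition perp2E := (perp2_0, perp2_1).

Lemma inner_perp2 b : inner b (perp2 b) = 0.
Proof. by rewrite inner2 !perp2E; ring. Qed.

Lemma inner_perp2_perp2 b : inner (perp2 b) (perp2 b) = inner b b.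
Proof. by rewrite !inner2 !perp2E !rmorphN /= !conjCK; ring. Qed.

Lemma wedgeZr a c (k : C) : wedge a (k *: c) = k * wedge a c.
Proof. by rewrite /wedge !cvE; ring. Qed.

Lemma perp2_expansion b w : inner b b = 1 ->
  w = inner b w *: b + inner (perp2 b) w *: perp2 b.
Proof.
move=> hb; apply: vec2P; rewrite !cvE !inner2 !perp2E !rmorphN /= !conjCK.
- by rewrite -[LHS]mulr1 -hb inner2; ring.
- by rewrite -[LHS]mulr1 -hb inner2; ring.
Qed.

Lemma lagrange2 a c : inner a c * (inner a c)^* + wedge a c * (wedge a c)^* =
  inner a a * inner c c.
Proof. by rewrite /wedge !inner2 !(rmorphD, rmorphM, rmorphB) /= !conjCK; ring. Qed.

Lemma wedge_eq0_parallel a c : wedge a c = 0 -> inner a a = 1 -> c = inner a c *: a.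
Proof.
move=> hd ha; apply: vec2P; rewrite !cvE inner2.
- rewrite -[LHS]mulr1 -ha inner2; apply/eqP; rewrite -subr_eq0; apply/eqP.
  transitivity (- (a (inord 1) 0)^* * wedge a c); first by rewrite /wedge; ring.
  by rewrite hd mulr0.
- rewrite -[LHS]mulr1 -ha inner2; apply/eqP; rewrite -subr_eq0; apply/eqP.
  transitivity ((a (inord 0) 0)^* * wedge a c); first by rewrite /wedge; ring.
  by rewrite hd mulr0.
Qed.

Lemma basis2_expansion b c w : wedge b c != 0 ->
  w = (wedge w c / wedge b c) *: b + (wedge b w / wedge b c) *: c.
Proof.
move=> bc; apply: vec2P; rewrite !cvE; move: bc; rewrite /wedge => bc; field => //.
Qed.

Lemma overlap2_sq a c : inner a a = 1 -> inner c c = 1 ->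
  `|inner a c| ^+ 2 = 1 - `|wedge a c| ^+ 2.
Proof.
move=> ha hc; rewrite !normCK; apply/eqP.
by rewrite eq_sym subr_eq lagrange2 ha hc mulr1.
Qed.

Lemma kron_overlap_neq1 a b c d :
  inner a a = 1 -> inner b b = 1 -> inner c c = 1 -> inner d d = 1 ->
  (wedge a c != 0) || (wedge b d != 0) ->
  (inner a c * inner b d) * (inner a c * inner b d)^* != 1.
Proof.
move=> ha hb hc hd hdet.
have -> : (inner a c * inner b d) * (inner a c * inner b d)^* =
          `|inner a c| ^+ 2 * `|inner b d| ^+ 2 by rewrite !normCK rmorphM; ring.
rewrite (overlap2_sq ha hc) (overlap2_sq hb hd).
have wedge_le1 x y : inner x x = 1 -> inner y y = 1 -> `|wedge x y| ^+ 2 <= 1.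
  by move=> hx hy; rewrite -subr_ge0 -overlap2_sq // exprn_ge0.
set A := `|wedge a c| ^+ 2; set B := `|wedge b d| ^+ 2.
apply/negP => /eqP h.
have AB : A + B = A * B.
  by transitivity (A * B - ((1 - A) * (1 - B) - 1)); [ring | rewrite h subrr subr0].
have B0 : B = 0.
  apply/le_anti; rewrite exprn_ge0 // andbT -(lerD2l A) addr0 AB.
  by rewrite ler_piMr ?exprn_ge0 ?wedge_le1.
have A0 : A = 0.
  apply/le_anti; rewrite exprn_ge0 // andbT -(lerD2r B) add0r AB.
  by rewrite ler_piMl ?exprn_ge0 ?wedge_le1.
move: hdet; rewrite -(normr_eq0 (wedge a c)) -(normr_eq0 (wedge b d)).
by rewrite -!(sqrf_eq0 `|_|) -/A -/B A0 B0 eqxx.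
Qed.

End Qubit.

(* The quadratic form v_00 v_11 - v_01 v_10 on C^2 (x) C^2 vanishes exactly on
   product vectors; it is half the determinant of the associated matrix. *)
Section ProductDefect.
Variable C : numClosedFieldType.
Implicit Types (v : 'cV[C]_4) (a b c d : 'cV[C]_2).

Definition defect v : C := v (inord 0) 0 * v (inord 3) 0 - v (inord 1) 0 * v (inord 2) 0.

Lemma defect_kron a b : defect (kronv a b) = 0.
Proof. by rewrite /defect !kronvE; ring. Qed.

Lemma defect_comb a b c d (al be : C) :
  defect (al *: kronv a b + be *: kronv c d) = al * be * wedge a c * wedge b d.
Proof. by rewrite /defect /wedge !(cvE, kronvE); ring. Qed.

End ProductDefect.

Section SeparableProjector.
Variable C : numClosedFieldType.
Implicit Types (P : 'M[C]_4) (a b c d : 'cV[C]_2).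

Definition product_onb P a b c d : Prop :=
  [/\ [/\ inner a a = 1, inner b b = 1, inner c c = 1 & inner d d = 1],
      inner a c = 0 \/ inner b d = 0,
      P *m kronv a b = kronv a b, P *m kronv c d = kronv c d &
      forall v, P *m v = v -> exists al be : C, v = al *: kronv a b + be *: kronv c d].

Lemma fixes_comb (n : nat) (P : 'M[C]_n) (x y : 'cV[C]_n) (al be : C) :
  P *m x = x -> P *m y = y -> P *m (al *: x + be *: y) = al *: x + be *: y.
Proof. by move=> hx hy; rewrite mulmxDr -!scalemxAr hx hy. Qed.

Lemma unit_neq0 (n : nat) (x : 'cV[C]_n) : inner x x = 1 -> x != 0.
Proof. by move=> h; apply: contra_eq_neq h => ->; rewrite inner0r eq_sym oner_neq0. Qed.

Lemma product_onb_common_left P a b a' b' :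
  inner a a = 1 -> inner b b = 1 -> inner a' a' = 1 ->
  wedge a a' = 0 -> wedge b b' != 0 ->
  P *m kronv a b = kronv a b -> P *m kronv a' b' = kronv a' b' ->
  (forall v, P *m v = v -> exists al be : C, v = al *: kronv a b + be *: kronv a' b') ->
  product_onb P a b a (perp2 b).
Proof.
move=> na nb na' aa' bb' Pab Pab' span.
have ea' : a' = inner a a' *: a := wedge_eq0_parallel aa' na.
have la0 : inner a a' != 0.
  by apply/eqP => e; move: (unit_neq0 na'); rewrite ea' e scale0r eqxx.
have ex' : kronv a' b' = kronv a (inner a a' *: b') by rewrite {1}ea' kronvZl kronvZr.
have bb'' : wedge b (inner a a' *: b') != 0 by rewrite wedgeZr mulf_neq0.
set b2 := inner a a' *: b' in ex' bb''; clearbody b2.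
rewrite ex' in Pab' span.
split.
- by rewrite inner_perp2_perp2.
- by right; rewrite inner_perp2.
- exact: Pab.
- by rewrite (basis2_expansion (perp2 b) bb'') kronvDr !kronvZr fixes_comb.
move=> v /span [al [be ->]].
exists (inner b (al *: b + be *: b2)), (inner (perp2 b) (al *: b + be *: b2)).
by rewrite -!kronvZr -!kronvDr -perp2_expansion.
Qed.

Lemma product_onb_common_right P a b a' b' :
  inner a a = 1 -> inner b b = 1 -> inner b' b' = 1 ->
  wedge a a' != 0 -> wedge b b' = 0 ->
  P *m kronv a b = kronv a b -> P *m kronv a' b' = kronv a' b' ->
  (forall v, P *m v = v -> exists al be : C, v = al *: kronv a b + be *: kronv a' b') ->
  product_onb P a b (perp2 a) b.
Proof.
move=> na nb nb' aa' bb' Pab Pab' span.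
have eb' : b' = inner b b' *: b := wedge_eq0_parallel bb' nb.
have lb0 : inner b b' != 0.
  by apply/eqP => e; move: (unit_neq0 nb'); rewrite eb' e scale0r eqxx.
have ex' : kronv a' b' = kronv (inner b b' *: a') b by rewrite {1}eb' kronvZl kronvZr.
have aa'' : wedge a (inner b b' *: a') != 0 by rewrite wedgeZr mulf_neq0.
set a2 := inner b b' *: a' in ex' aa''; clearbody a2.
rewrite ex' in Pab' span.
split.
- by rewrite inner_perp2_perp2.
- by left; rewrite inner_perp2.
- exact: Pab.
- by rewrite (basis2_expansion (perp2 a) aa'') kronvDl !kronvZl fixes_comb.
move=> v /span [al [be ->]].
exists (inner a (al *: a + be *: a2)), (inner (perp2 a) (al *: a + be *: a2)).
by rewrite -!kronvZl -!kronvDl -perp2_expansion.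
Qed.

(* A nonnegative combination of product projectors of rank two has two terms
   of positive weight whose product vectors are not parallel: otherwise all
   its terms are multiples of a single rank-one projector. *)
Lemma rank2_independent_terms k (t : 'I_k -> C) (a b : 'I_k -> 'cV[C]_2) P :
  (forall i, 0 <= t i) -> (forall i, inner (a i) (a i) = 1) ->
  (forall i, inner (b i) (b i) = 1) ->
  P = \sum_(i < k) t i *: ketbra (kronv (a i) (b i)) -> \rank P = 2 ->
  exists i j, [/\ 0 < t i, 0 < t j & (wedge (a i) (a j) != 0) || (wedge (b i) (b j) != 0)].
Proof.
move=> ht ha hb hP hR.
have [/existsP [i /existsP [j /and3P [ti tj hij]]] | indep] := boolP
  [exists i, exists j, [&& 0 < t i, 0 < t j & (wedge (a i) (a j) != 0) || (wedge (b i) (b j) != 0)]].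
  by exists i, j.
suff [x [s hPx]] : exists x s, P = s *: ketbra x.
  by move: (rank_scaled_ketbra x s); rewrite -hPx hR.
have pos0 j : ~~ (0 < t j) -> t j = 0.
  by move=> tj; have := ht j; rewrite le_eqVlt (negbTE tj) orbF => /eqP <-.
have [/existsP [i0 ti0] | none] := boolP [exists i, 0 < t i]; last first.
  exists 0, 0; rewrite hP scale0r big1 // => j _.
  by rewrite pos0 ?scale0r //; apply: contra none => tj; apply/existsP; exists j.
pose g j := inner (a i0) (a j) * inner (b i0) (b j).
exists (kronv (a i0) (b i0)), (\sum_j t j * (g j * (g j)^*)).
rewrite hP scaler_suml; apply: eq_bigr => j _.
have [tj|/pos0 ->] := boolP (0 < t j); last by rewrite !scale0r mul0r scale0r.
have : ~~ ((wedge (a i0) (a j) != 0) || (wedge (b i0) (b j) != 0)).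
  by apply: contra indep => h; apply/existsP; exists i0; apply/existsP; exists j; rewrite ti0 tj h.
rewrite negb_or !negbK => /andP [/eqP aij /eqP bij].
rewrite (wedge_eq0_parallel aij (ha i0)) (wedge_eq0_parallel bij (hb i0)).
by rewrite kronvZl kronvZr scalerA ketbraZ scalerA mulrA.
Qed.

(* If the range of P = sum_l t_l |a_l b_l><a_l b_l| is spanned by a_i (x) b_i
   and a_j (x) b_j with a_i, a_j and b_i, b_j both independent, then a
   combination of these two is a product vector only if it lies on one of
   the two axes; so every term of P lies on an axis and the two spanning
   vectors are orthogonal. *)
Lemma product_onb_generic k (t : 'I_k -> C) (a b : 'I_k -> 'cV[C]_2) P i j :
  (forall l, 0 <= t l) -> (forall l, inner (a l) (a l) = 1) ->
  (forall l, inner (b l) (b l) = 1) ->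
  P = \sum_(l < k) t l *: ketbra (kronv (a l) (b l)) ->
  (forall l, 0 < t l -> P *m kronv (a l) (b l) = kronv (a l) (b l)) ->
  0 < t i -> 0 < t j -> wedge (a i) (a j) != 0 -> wedge (b i) (b j) != 0 ->
  (forall v, P *m v = v ->
     exists al be : C, v = al *: kronv (a i) (b i) + be *: kronv (a j) (b j)) ->
  product_onb P (a i) (b i) (a j) (b j).
Proof.
move=> ht ha hb hP fixP ti tj ai bj span.
have nx l : inner (kronv (a l) (b l)) (kronv (a l) (b l)) = 1.
  by rewrite inner_kron ha hb mulr1.
have axis l : 0 < t l -> exists al be,
    kronv (a l) (b l) = al *: kronv (a i) (b i) + be *: kronv (a j) (b j) /\ al * be = 0.
  move=> tl; have [al [be hl]] := span _ (fixP l tl).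
  exists al, be; split => //; apply/eqP.
  have := defect_kron (a l) (b l); rewrite hl defect_comb => /eqP.
  by rewrite !mulf_eq0 (negbTE ai) (negbTE bj) !orbF.
have overlap1 : inner (kronv (a i) (b i)) (kronv (a j) (b j)) *
    (inner (kronv (a i) (b i)) (kronv (a j) (b j)))^* != 1.
  by rewrite inner_kron kron_overlap_neq1 ?ai.
have /eqP := orth_of_axis_terms ht hP (fixP i ti) (fixP j tj) (nx i) (nx j) nx axis overlap1.
rewrite inner_kron mulf_eq0 => orth.
split => //; last exact: fixP.
- by case/orP: orth => /eqP; [left | right].
- exact: fixP.
Qed.

Lemma separable_projector_product_onb P :
  orth_proj2 P -> separable P -> exists a b c d, product_onb P a b c d.
Proof.
move=> [hA [hI hR]] [k [t [a [b [ht [ha [hb hP]]]]]]].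
have {}hP : P = \sum_(i < k) t i *: ketbra (kronv (a i) (b i)).
  by rewrite hP; apply: eq_bigr => i _; rewrite kronm_ketbra.
have fixP := projector_fixes_terms hA hI ht hP.
have [i [j [ti tj hij]]] := rank2_independent_terms ht ha hb hP hR.
have nx l : inner (kronv (a l) (b l)) (kronv (a l) (b l)) = 1.
  by rewrite inner_kron ha hb mulr1.
have := rank2_span hR (fixP i ti) (fixP j tj) (nx i) (nx j).
rewrite inner_kron (kron_overlap_neq1 (ha i) (hb i) (ha j) (hb j) hij) => /(_ isT) span.
have [ai|ai] := eqVneq (wedge (a i) (a j)) 0.
  have bj : wedge (b i) (b j) != 0 by move: hij; rewrite ai eqxx.
  exists (a i), (b i), (a i), (perp2 (b i)).
  exact: product_onb_common_left (ha i) (hb i) (ha j) ai bj (fixP i ti) (fixP j tj) span.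
have [bj|bj] := eqVneq (wedge (b i) (b j)) 0.
  exists (a i), (b i), (perp2 (a i)), (b i).
  exact: product_onb_common_right (ha i) (hb i) (hb j) ai bj (fixP i ti) (fixP j tj) span.
exists (a i), (b i), (a j), (b j).
exact: product_onb_generic ht ha hb hP fixP ti tj ai bj span.
Qed.

End SeparableProjector.

Section TwoByTwo.
Variable C : numClosedFieldType.
Implicit Types (A B M : 'M[C]_2).

Lemma char_poly2 M : char_poly M = 'X^2 - (\tr M) *: 'X + (\det M)%:P.
Proof.
apply/polyP => i.
have hs := size_char_poly M; have hm := char_poly_monic M.
have ht := char_poly_trace M isT; have hd := char_poly_det M.
rewrite !coefD !coefN coefZ coefX coefXn coefC.
case: i => [|[|[|i]]] /=.
- by rewrite hd sqrrN expr1n mul1r mulr0 subr0 add0r.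
- by rewrite ht mulr1 sub0r addr0.
- by move/monicP: hm; rewrite /lead_coef hs /= => ->; rewrite mulr0 subr0 addr0.
- by rewrite mulr0 subr0 addr0; apply: nth_default; rewrite hs.
Qed.

Lemma char_poly2_roots M (z1 z2 : C) :
  \tr M = z1 + z2 -> \det M = z1 * z2 ->
  char_poly M = ('X - z1%:P) * ('X - z2%:P).
Proof.
move=> htr hdet; rewrite char_poly2 htr hdet -mul_polyC rmorphD rmorphM /=.
by ring.
Qed.

Lemma adj2_00 B : \adj B (inord 0) (inord 0) = B (inord 1) (inord 1).
Proof.
rewrite mxE /cofactor det_mx11 !mxE inordK //= expr0 mul1r.
by congr (B _ _); apply/val_inj; rewrite /= !inordK.
Qed.
Lemma adj2_11 B : \adj B (inord 1) (inord 1) = B (inord 0) (inord 0).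
Proof.
rewrite mxE /cofactor det_mx11 !mxE inordK //= -signr_odd /= expr0 mul1r.
by congr (B _ _); apply/val_inj; rewrite /= !inordK.
Qed.
Lemma adj2_01 B : \adj B (inord 0) (inord 1) = - B (inord 0) (inord 1).
Proof.
rewrite mxE /cofactor det_mx11 !mxE !inordK //= expr1 mulN1r.
by congr (- B _ _); apply/val_inj; rewrite /= !inordK.
Qed.
Lemma adj2_10 B : \adj B (inord 1) (inord 0) = - B (inord 1) (inord 0).
Proof.
rewrite mxE /cofactor det_mx11 !mxE !inordK //= expr1 mulN1r.
by congr (- B _ _); apply/val_inj; rewrite /= !inordK.
Qed.

Lemma tr_mul_adj2 A B : \tr (A *m \adj B) =
  A (inord 0) (inord 0) * B (inord 1) (inord 1) - A (inord 0) (inord 1) * B (inord 1) (inord 0)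
  - A (inord 1) (inord 0) * B (inord 0) (inord 1) + A (inord 1) (inord 1) * B (inord 0) (inord 0).
Proof. by rewrite /mxtrace sum2 !mxE !sum2 adj2_00 adj2_11 adj2_01 adj2_10; ring. Qed.

End TwoByTwo.

Section AssociatedMatrix.
Variable C : numClosedFieldType.
Implicit Types (v : 'cV[C]_4) (r s : 'cV[C]_2).

Lemma assoc00 v : assoc_mx v (inord 0) (inord 0) = sqrtC 2 * v (inord 0) 0.
Proof. by rewrite mxE !inordK. Qed.
Lemma assoc01 v : assoc_mx v (inord 0) (inord 1) = sqrtC 2 * v (inord 2) 0.
Proof. by rewrite mxE !inordK. Qed.
Lemma assoc10 v : assoc_mx v (inord 1) (inord 0) = sqrtC 2 * v (inord 1) 0.
Proof. by rewrite mxE !inordK. Qed.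
Lemma assoc11 v : assoc_mx v (inord 1) (inord 1) = sqrtC 2 * v (inord 3) 0.
Proof. by rewrite mxE !inordK. Qed.
Definition assocE := (assoc00, assoc01, assoc10, assoc11).

Lemma sqrt2K : sqrtC 2 * sqrtC 2 = 2 :> C.
Proof. by rewrite -expr2 sqrtCK. Qed.

Lemma det_assoc_comb r1 s1 r2 s2 (x y : C) :
  \det (assoc_mx (x *: kronv r1 s1 + y *: kronv r2 s2)) =
  2 * (x * y * (wedge r1 r2 * wedge s1 s2)).
Proof.
rewrite det2 !assocE.
transitivity (sqrtC 2 * sqrtC 2 * defect (x *: kronv r1 s1 + y *: kronv r2 s2)).
  by rewrite /defect; ring.
by rewrite sqrt2K defect_comb; ring.
Qed.

Lemma tr_assoc_adj_comb r1 s1 r2 s2 (x1 y1 x2 y2 : C) :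
  \tr (assoc_mx (x1 *: kronv r1 s1 + y1 *: kronv r2 s2) *m
       \adj (assoc_mx (x2 *: kronv r1 s1 + y2 *: kronv r2 s2))) =
  2 * ((x1 * y2 + x2 * y1) * (wedge r1 r2 * wedge s1 s2)).
Proof.
rewrite tr_mul_adj2 !assocE !(cvE, kronvE) /wedge -[2 in RHS]sqrt2K.
by ring.
Qed.

End AssociatedMatrix.

Section UnitaryCoefficients.
Variable C : numClosedFieldType.
Implicit Types (x y : C).

Lemma inner_comb_onb (n : nat) (p q : 'cV[C]_n) x1 y1 x2 y2 :
  inner p p = 1 -> inner q q = 1 -> inner p q = 0 ->
  inner (x1 *: p + y1 *: q) (x2 *: p + y2 *: q) = x1^* * x2 + y1^* * y2.
Proof.
move=> np nq opq; rewrite !(innerDl, innerDr, innerZl, innerZr).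
by rewrite np nq opq (inner_orth_sym opq); ring.
Qed.

(* Orthogonality x1^* x2 + y1^* y2 = 0 makes the ratios x1/x2 and y1/y2
   antiparallel, with factor -|y2|^2/|x2|^2. *)
Lemma antiparallel_ratios x1 y1 x2 y2 :
  x2 != 0 -> y2 != 0 -> x1^* * x2 + y1^* * y2 = 0 -> antiparallel (x1 / x2) (y1 / y2).
Proof.
move=> x20 y20 ho.
have ho' : y1 * y2^* = - (x1 * x2^*).
  apply/eqP; rewrite -addr_eq0; apply/eqP.
  by have := congr1 Num.conj ho; rewrite rmorph0 rmorphD !rmorphM /= !conjCK => <-; ring.
have x2c : x2^* != 0 by rewrite conjC_eq0.
have y2c : y2^* != 0 by rewrite conjC_eq0.
exists (- (`|y2| ^+ 2 / `|x2| ^+ 2)).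
have neg : - (`|y2| ^+ 2 / `|x2| ^+ 2) < 0.
  by rewrite oppr_lt0 divr_gt0 // exprn_gt0 // normr_gt0.
split; first exact: ltr0_real.
split; first exact: neg.
rewrite !normCK.
transitivity (- (y1 * y2^*) / (x2 * x2^*)); first by rewrite ho' opprK; field; rewrite ?x20 ?x2c.
by field; rewrite ?x20 ?y20 ?x2c ?y2c.
Qed.

(* The columns of a unitary 2 x 2 matrix have equal |x y|: |x1| = |y2| and
   |y1| = |x2|. *)
Lemma unitary_abs_products x1 y1 x2 y2 :
  x1^* * x1 + y1^* * y1 = 1 -> x2^* * x2 + y2^* * y2 = 1 ->
  x1^* * x2 + y1^* * y2 = 0 -> `|x1 * y1| = `|x2 * y2|.
Proof.
have n2 z : z^* * z = `|z| ^+ 2 by rewrite normCK mulrC.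
rewrite !n2 => hu1 hu2 ho.
have e3 : `|x1| ^+ 2 * `|x2| ^+ 2 = `|y1| ^+ 2 * `|y2| ^+ 2.
  have : x1^* * x2 = - (y1^* * y2) by apply/eqP; rewrite -addr_eq0 ho.
  by move/(congr1 (fun z => `|z| ^+ 2)); rewrite normrN !normrM !norm_conjC !exprMn.
have hy1 : `|y1| ^+ 2 = 1 - `|x1| ^+ 2 by rewrite -hu1; ring.
have hy2 : `|y2| ^+ 2 = 1 - `|x2| ^+ 2 by rewrite -hu2; ring.
rewrite hy1 hy2 in e3.
have hx2 : `|x2| ^+ 2 = 1 - `|x1| ^+ 2.
  apply/eqP; rewrite -subr_eq0; apply/eqP.
  transitivity (- ((1 - `|x1| ^+ 2) * (1 - `|x2| ^+ 2) - `|x1| ^+ 2 * `|x2| ^+ 2)); first ring.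
  by rewrite e3 subrr oppr0.
apply/eqP; rewrite -(@eqrXn2 _ 2) ?normr_ge0 // !normrM !exprMn hy1 hy2 hx2.
by apply/eqP; ring.
Qed.

End UnitaryCoefficients.

(* The orthogonal complement of the range: if (a (x) b, c (x) d) is an
   orthonormal product basis of the range of P, completing it factorwise
   with perp2 gives an orthonormal product basis of the complement. *)
Section Complement.
Variable C : numClosedFieldType.
Implicit Types (P : 'M[C]_4) (a b c d : 'cV[C]_2).

Lemma orthonormal_complement4 (e0 e1 e2 e3 v : 'cV[C]_4) :
  inner e0 e0 = 1 -> inner e1 e1 = 1 -> inner e2 e2 = 1 -> inner e3 e3 = 1 ->
  inner e0 e1 = 0 -> inner e0 e2 = 0 -> inner e0 e3 = 0 ->
  inner e1 e2 = 0 -> inner e1 e3 = 0 -> inner e2 e3 = 0 ->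
  inner e0 v = 0 -> inner e1 v = 0 ->
  v = inner e2 v *: e2 + inner e3 v *: e3.
Proof.
move=> n0 n1 n2 n3 o01 o02 o03 o12 o13 o23 v0 v1.
pose f (k : 'I_4) := nth 0 [:: e0; e1; e2; e3] k.
have onb i j : inner (f i) (f j) = (i == j)%:R.
  case: i j => [[|[|[|[|i]]]] Hi] [[|[|[|[|j]]]] Hj]; rewrite /f //=;
  by rewrite ?(n0, n1, n2, n3, o01, o02, o03, o12, o13, o23, inner_orth_sym o01,
    inner_orth_sym o02, inner_orth_sym o03, inner_orth_sym o12, inner_orth_sym o13,
    inner_orth_sym o23).
rewrite {1}(orthonormal_expansion onb v) !big_ord_recr big_ord0 /= add0r /f /=.
by rewrite v0 v1 !scale0r !add0r.
Qed.

Lemma product_onb_orth P a b c d :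
  product_onb P a b c d -> inner (kronv a b) (kronv c d) = 0.
Proof. by case=> _ orth _ _ _; rewrite inner_kron; case: orth => ->; rewrite ?mul0r ?mulr0. Qed.

Lemma perp_product_onb P a b c d : product_onb P a b c d ->
  exists r1 s1 r2 s2 : 'cV[C]_2,
    [/\ inner (kronv r1 s1) (kronv r1 s1) = 1, inner (kronv r2 s2) (kronv r2 s2) = 1,
        inner (kronv r1 s1) (kronv r2 s2) = 0 &
        forall v, in_perp P v ->
          v = inner (kronv r1 s1) v *: kronv r1 s1 + inner (kronv r2 s2) v *: kronv r2 s2].
Proof.
move=> onb; have o01 := product_onb_orth onb.
case: onb => [[na nb nc nd] orth Pab Pcd _].
have complete e2 e3 :
    inner e2 e2 = 1 -> inner e3 e3 = 1 -> inner (kronv a b) e2 = 0 ->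
    inner (kronv a b) e3 = 0 -> inner (kronv c d) e2 = 0 ->
    inner (kronv c d) e3 = 0 -> inner e2 e3 = 0 ->
    forall v, in_perp P v -> v = inner e2 v *: e2 + inner e3 v *: e3.
  move=> n2 n3 o02 o03 o12 o13 o23 v vperp.
  have n0 : inner (kronv a b) (kronv a b) = 1 by rewrite inner_kron na nb mulr1.
  have n1 : inner (kronv c d) (kronv c d) = 1 by rewrite inner_kron nc nd mulr1.
  exact: orthonormal_complement4 n0 n1 n2 n3 o01 o02 o03 o12 o13 o23 (vperp _ Pab) (vperp _ Pcd).
case: orth => orth;
  [exists a, (perp2 b), c, (perp2 d) | exists (perp2 a), b, (perp2 c), d];
have facts := (inner_kron, inner_perp2_perp2, inner_perp2, inner_orth_sym orth, orth,
               na, nb, nc, nd, mul0r, mulr0, mulr1);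
by split; rewrite ?facts //; apply: complete; rewrite ?facts.
Qed.

End Complement.

(* Second half of the theorem, for two orthonormal entangled vectors
   psi = x1 p + y1 q and Phi = x2 p + y2 q in the span of orthonormal product
   vectors p = r1 (x) s1, q = r2 (x) s2: psi Phi^-1 has trace x1/x2 + y1/y2
   and determinant (x1/x2)(y1/y2), and (x_i, y_i) form a unitary matrix. *)
Section EntangledPair.
Variable C : numClosedFieldType.

Lemma entangled_pair_in_product_plane (r1 s1 r2 s2 : 'cV[C]_2) (psi Phi : 'cV[C]_4)
    (x1 y1 x2 y2 : C) :
  inner (kronv r1 s1) (kronv r1 s1) = 1 -> inner (kronv r2 s2) (kronv r2 s2) = 1 ->
  inner (kronv r1 s1) (kronv r2 s2) = 0 ->
  psi = x1 *: kronv r1 s1 + y1 *: kronv r2 s2 ->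
  Phi = x2 *: kronv r1 s1 + y2 *: kronv r2 s2 ->
  unit_vec psi -> unit_vec Phi -> inner psi Phi = 0 -> entangled Phi ->
  two_antiparallel_eigenvalues (assoc_mx psi *m invmx (assoc_mx Phi))
  /\ concurrence psi = concurrence Phi.
Proof.
move=> np nq opq -> -> upsi uPhi ortho; rewrite /entangled /concurrence.
rewrite !det_assoc_comb; set K := wedge r1 r2 * wedge s1 s2.
rewrite /unit_vec !inner_comb_onb // in upsi uPhi ortho.
rewrite normr_gt0 !mulf_eq0 !negb_or pnatr_eq0 /= => /and3P [/andP [x20 y20] Kr Ks].
split; last by rewrite !(normrM 2) !(normrM (_ * _) K) (unitary_abs_products upsi uPhi ortho).
exists (x1 / x2), (y1 / y2); split; last exact: antiparallel_ratios.
apply: char_poly2_roots.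
- rewrite /invmx unitmxE unitfE det_assoc_comb -/K ?mulf_neq0 ?pnatr_eq0 //.
  rewrite -scalemxAr mxtraceZ tr_assoc_adj_comb -/K.
  by field; rewrite ?x20 ?y20 /K ?mulf_neq0 ?pnatr_eq0.
- rewrite det_mulmx det_inv !det_assoc_comb -/K.
  by field; rewrite ?x20 ?y20 /K ?mulf_neq0 ?pnatr_eq0.
Qed.

End EntangledPair.

Unset Implicit Arguments.

Theorem lemma1 (C : numClosedFieldType) (P : 'M[C]_4) :
  orth_proj2 P -> separable P ->
  (exists x1 x2 : 'cV[C]_4,
      [/\ product_state x1, product_state x2,
          in_range P x1 /\ in_range P x2,
          unit_vec x1 /\ unit_vec x2 /\ inner x1 x2 = 0
        & forall v, in_range P v -> exists c1 c2 : C, v = c1 *: x1 + c2 *: x2])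
  /\
  (forall psi Phi : 'cV[C]_4,
      in_perp P psi -> in_perp P Phi ->
      unit_vec psi -> unit_vec Phi -> inner psi Phi = 0 ->
      entangled psi -> entangled Phi ->
      two_antiparallel_eigenvalues (assoc_mx psi *m invmx (assoc_mx Phi))
      /\ concurrence psi = concurrence Phi).
Proof.
move=> hproj hsep.
have [a [b [c [d onb]]]] := separable_projector_product_onb hproj hsep.
have [r1 [s1 [r2 [s2 [np nq opq expand]]]]] := perp_product_onb onb.
have o01 := product_onb_orth onb.
case: onb => [[na nb nc nd] _ Pab Pcd span].
split.
- exists (kronv a b), (kronv c d); split => //; [by exists a, b | by exists c, d |].
  by rewrite /unit_vec o01 !inner_kron na nb nc nd mulr1.
- move=> psi Phi ppsi pPhi upsi uPhi ortho _ ePhi.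
  exact: entangled_pair_in_product_plane np nq opq (expand _ ppsi) (expand _ pPhi)
    upsi uPhi ortho ePhi.
Qed.
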